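(* Let $\beta>\alpha>0$ and let $q=(q_1,q_2,q_3,q_4)$ be a convex non-collinear central configuration of the planar Newtonian 4-body problem with masses $m_1=m_2=\beta$, $m_3=m_4=\alpha$, with $q_1,q_2,q_3,q_4$ in cyclic order around the convex quadrilateral. If $r_{13}=r_{24}$, then $\Delta_4=-\Delta_3$.
   Context: Bodies have positions $q_i\in\mathbb{R}^2$ and masses $m_i>0$; $r_{ij}=\|q_i-q_j\|$; $U(q)=\sum_{i<j}m_im_j/r_{ij}$. A configuration with distinct points and $\sum_i m_iq_i=0$ is a central configuration if $\sum_{j\neq i} m_j\frac{q_j-q_i}{r_{ij}^3}=\lambda q_i$ for all $i$ and some constant $\lambda$. ''Convex non-collinear'': the four points are vertices of a strictly convex quadrilateral. For $1\le i\le 4$, $|\Delta_i|$ denotes the area of the triangle formed by the three points $q_j$, $j\neq i$, and the oriented areas are $\Delta_1=-|\Delta_1|$, $\Delta_2=|\Delta_2|$, $\Delta_3=-|\Delta_3|$, $\Delta_4=|\Delta_4|$; they satisfy $\Delta_1+\Delta_2+\Delta_3+\Delta_4=0$. *)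

From Stdlib Require Import Reals Lra Lia.
Open Scope R_scope.

(* Positions of the four bodies: q : nat -> R*R, bodies indexed 1..4. *)

Definition sum4 (f : nat -> R) : R := f 1%nat + f 2%nat + f 3%nat + f 4%nat.

Definition rdist (q : nat -> R * R) (i j : nat) : R :=
  sqrt ((fst (q i) - fst (q j)) ^ 2 + (snd (q i) - snd (q j)) ^ 2).

Definition is_body (i : nat) : Prop := (1 <= i <= 4)%nat.

Definition central_configuration4 (m : nat -> R) (q : nat -> R * R) : Prop :=
  (forall i j, is_body i -> is_body j -> i <> j -> q i <> q j) /\
  sum4 (fun i => m i * fst (q i)) = 0 /\
  sum4 (fun i => m i * snd (q i)) = 0 /\
  exists lam : R, forall i, is_body i ->
    sum4 (fun j => if Nat.eqb j i then 0
                   else m j * (fst (q j) - fst (q i)) / rdist q i j ^ 3)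
      = lam * fst (q i) /\
    sum4 (fun j => if Nat.eqb j i then 0
                   else m j * (snd (q j) - snd (q i)) / rdist q i j ^ 3)
      = lam * snd (q i).

Definition sarea (a b c : R * R) : R :=
  ((fst b - fst a) * (snd c - snd a) - (fst c - fst a) * (snd b - snd a)) / 2.

(* q1,q2,q3,q4 are, in this cyclic order, the vertices of a strictly convex
   quadrilateral: the four consecutive triangles are all nondegenerate and
   have the same orientation. *)
Definition convex_cyclic4 (q : nat -> R * R) : Prop :=
  let t1 := sarea (q 1%nat) (q 2%nat) (q 3%nat) in
  let t2 := sarea (q 2%nat) (q 3%nat) (q 4%nat) in
  let t3 := sarea (q 3%nat) (q 4%nat) (q 1%nat) in
  let t4 := sarea (q 4%nat) (q 1%nat) (q 2%nat) in
  (0 < t1 /\ 0 < t2 /\ 0 < t3 /\ 0 < t4) \/ (t1 < 0 /\ t2 < 0 /\ t3 < 0 /\ t4 < 0).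

Definition absDelta (q : nat -> R * R) (i : nat) : R :=
  match i with
  | 1%nat => Rabs (sarea (q 2%nat) (q 3%nat) (q 4%nat))
  | 2%nat => Rabs (sarea (q 1%nat) (q 3%nat) (q 4%nat))
  | 3%nat => Rabs (sarea (q 1%nat) (q 2%nat) (q 4%nat))
  | _ => Rabs (sarea (q 1%nat) (q 2%nat) (q 3%nat))
  end.

Definition oDelta (q : nat -> R * R) (i : nat) : R :=
  if Nat.odd i then - absDelta q i else absDelta q i.

(* Let M be the total mass and e_ij := r_ij^-3 + lambda / M.  Using the centre of
   mass, the central configuration equations become sum_j m_j e_ij (q_j - q_i) = 0,
   and taking cross products with q_k - q_i turns them into linear relations
   between the e_ij with the triangle areas D_l (D_l omits q_l, cyclically
   oriented) as coefficients.  If e_12 = 0 these relations force every e_ij to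
   vanish, so all six mutual distances are equal, which is impossible for four
   points of the plane.  Otherwise two relations together with
   D_4 + D_2 = D_1 + D_3 give (D_4 - D_1)(D_4 - D_3) = 0.  If D_4 = D_1, then
   q1q4 is parallel to q2q3, the equal diagonals make the quadrilateral an
   isosceles trapezoid, r_12 = r_34, and the relations give
   (beta^2 - alpha^2) e_12 = 0, a contradiction.  Hence D_4 = D_3. *)

From Stdlib Require Import Reals Lra Lia.
Open Scope R_scope.

Lemma pow3_inj r s : 0 < r -> 0 < s -> r ^ 3 = s ^ 3 -> r = s.
Proof.
  intros Hr Hs H.
  assert (Hf : (r - s) * (r ^ 2 + r * s + s ^ 2) = 0) by (ring_simplify; lra).
  destruct (Rmult_integral _ _ Hf) as [Hd|Hd]; nra.
Qed.

Definition sqdist (a b : R * R) : R := (fst a - fst b) ^ 2 + (snd a - snd b) ^ 2.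

Lemma sqdist_pos a b : a <> b -> 0 < sqdist a b.
Proof.
  intros Hab. destruct a as [x y], b as [x' y']; unfold sqdist; cbn.
  pose proof (pow2_ge_0 (x - x')) as Hx; pose proof (pow2_ge_0 (y - y')) as Hy.
  destruct (Rle_lt_dec ((x - x') ^ 2 + (y - y') ^ 2) 0) as [H|H]; [|exact H].
  assert (Hz : (x - x')² + (y - y')² = 0) by (rewrite !Rsqr_pow2; lra).
  destruct (Rplus_sqr_eq_0 _ _ Hz).
  exfalso; apply Hab; f_equal; lra.
Qed.

Lemma rdist_sqdist q i j : rdist q i j = sqrt (sqdist (q i) (q j)).
Proof. reflexivity. Qed.

Lemma rdist_sym q i j : rdist q i j = rdist q j i.
Proof. unfold rdist. f_equal. ring. Qed.

Lemma rdist_pos q i j : q i <> q j -> 0 < rdist q i j.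
Proof. intros H. apply sqrt_lt_R0, sqdist_pos, H. Qed.

Lemma rdist_sq q i j : rdist q i j ^ 2 = sqdist (q i) (q j).
Proof.
  apply pow2_sqrt. unfold sqdist.
  apply Rplus_le_le_0_compat; apply pow2_ge_0.
Qed.

(* The Gram determinant of q2 - q1, q3 - q1, q4 - q1 vanishes in the plane;
   its entries are written through squared distances by the polarisation
   identity, and the determinant is multiplied by 8. *)
Lemma cayley_menger_planar (p1 p2 p3 p4 : R * R) :
  let d12 := sqdist p1 p2 in let d13 := sqdist p1 p3 in let d14 := sqdist p1 p4 in
  let d23 := sqdist p2 p3 in let d24 := sqdist p2 p4 in let d34 := sqdist p3 p4 in
  8 * d12 * d13 * d14
  + 2 * (d12 + d13 - d23) * (d13 + d14 - d34) * (d12 + d14 - d24)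
  - 2 * d12 * (d13 + d14 - d34) ^ 2
  - 2 * d13 * (d12 + d14 - d24) ^ 2
  - 2 * d14 * (d12 + d13 - d23) ^ 2 = 0.
Proof.
  destruct p1, p2, p3, p4. unfold sqdist; cbn. ring.
Qed.

Lemma four_points_not_equidistant (p1 p2 p3 p4 : R * R) d :
  0 < d ->
  sqdist p1 p2 = d -> sqdist p1 p3 = d -> sqdist p1 p4 = d ->
  sqdist p2 p3 = d -> sqdist p2 p4 = d -> sqdist p3 p4 = d -> False.
Proof.
  intros Hd H12 H13 H14 H23 H24 H34.
  pose proof (cayley_menger_planar p1 p2 p3 p4) as Hcm; cbv zeta in Hcm.
  rewrite H12, H13, H14, H23, H24, H34 in Hcm.
  assert (0 < d * d * d) by (apply Rmult_lt_0_compat; nra).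
  lra.
Qed.

Lemma collinear_vector ux uy vx vy :
  (ux, uy) <> (0, 0) -> ux * vy - uy * vx = 0 ->
  exists k, vx = k * ux /\ vy = k * uy.
Proof.
  intros Hu Hcross.
  set (N := ux ^ 2 + uy ^ 2).
  assert (HN : N <> 0).
  { apply (sqdist_pos (ux, uy) (0, 0)) in Hu. unfold sqdist in Hu; cbn in Hu.
    unfold N; lra. }
  exists ((ux * vx + uy * vy) / N).
  split; apply (Rmult_eq_reg_r N); try exact HN.
  - transitivity ((ux * vx + uy * vy) * ux - uy * (ux * vy - uy * vx)); [unfold N; ring|].
    rewrite Hcross. field. exact HN.
  - transitivity ((ux * vx + uy * vy) * uy + ux * (ux * vy - uy * vx)); [unfold N; ring|].
    rewrite Hcross. field. exact HN.
Qed.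

(* [sarea p1 p2 p3 = sarea p2 p3 p4] says that p1p4 is parallel to p2p3, and the
   sign condition that p1 - p4 points against p3 - p2. *)
Lemma isosceles_trapezoid (p1 p2 p3 p4 : R * R) :
  p2 <> p3 ->
  sarea p1 p2 p3 = sarea p2 p3 p4 ->
  0 < sarea p2 p3 p4 * sarea p3 p4 p1 ->
  sqdist p1 p3 = sqdist p2 p4 ->
  sqdist p1 p2 = sqdist p3 p4.
Proof.
  destruct p1 as [x1 y1], p2 as [x2 y2], p3 as [x3 y3], p4 as [x4 y4].
  intros Hne Hpar Hconv Hdiag.
  destruct (collinear_vector (x3 - x2) (y3 - y2) (x1 - x4) (y1 - y4)) as [k [Hx Hy]].
  { intros H; injection H as H H'; apply Hne; f_equal; lra. }
  { unfold sarea in Hpar; cbn in Hpar; lra. }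
  assert (Hx1 : x1 = x4 + k * (x3 - x2)) by lra.
  assert (Hy1 : y1 = y4 + k * (y3 - y2)) by lra.
  assert (Harea : sarea (x3, y3) (x4, y4) (x1, y1) = - k * sarea (x2, y2) (x3, y3) (x4, y4))
    by (unfold sarea; cbn; rewrite Hx1, Hy1; field).
  assert (Hk : k < 0) by nra.
  set (P := 2 * ((x3 - x2) * (x4 - x2) + (y3 - y2) * (y4 - y2))
            + (k - 1) * ((x3 - x2) ^ 2 + (y3 - y2) ^ 2)).
  assert (Hdiff13 : sqdist (x1, y1) (x3, y3) - sqdist (x2, y2) (x4, y4) = (k - 1) * P)
    by (unfold sqdist, P; cbn; rewrite Hx1, Hy1; ring).
  assert (Hdiff12 : sqdist (x1, y1) (x2, y2) - sqdist (x3, y3) (x4, y4) = (k + 1) * P)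
    by (unfold sqdist, P; cbn; rewrite Hx1, Hy1; ring).
  assert (HP : P = 0).
  { destruct (Rmult_integral (k - 1) P) as [H|H]; lra. }
  rewrite HP in Hdiff12. lra.
Qed.

Lemma sum4_offdiag (h : nat -> R) i :
  is_body i -> sum4 (fun j => if Nat.eqb j i then 0 else h j) = sum4 h - h i.
Proof.
  intros Hi. unfold is_body in Hi.
  destruct i as [|[|[|[|[|i]]]]]; try lia; unfold sum4; cbn; ring.
Qed.

(* With [sum_j m_j x_j = 0] one has [lam x_i = -(lam / M) sum_j m_j (x_j - x_i)].
   The conclusion sums over all [j]: the diagonal term vanishes through the factor
   [x_i - x_i], whatever the junk value [/ g i]. *)
Lemma cc_balance (m x g : nat -> R) (lam : R) i :
  is_body i -> sum4 m <> 0 ->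
  sum4 (fun j => m j * x j) = 0 ->
  sum4 (fun j => if Nat.eqb j i then 0 else m j * (x j - x i) / g j) = lam * x i ->
  sum4 (fun j => m j * (/ g j + lam / sum4 m) * (x j - x i)) = 0.
Proof.
  intros Hi HM Hcom Heq. rewrite sum4_offdiag in Heq by exact Hi.
  transitivity ((sum4 (fun j => m j * (x j - x i) / g j) - m i * (x i - x i) / g i)
                + lam / sum4 m * (sum4 (fun j => m j * x j) - sum4 m * x i)).
  - unfold sum4, Rdiv; ring.
  - rewrite Heq, Hcom. field. exact HM.
Qed.

Lemma balance_sarea (c : nat -> R) (q : nat -> R * R) i k :
  sum4 (fun j => c j * (fst (q j) - fst (q i))) = 0 ->
  sum4 (fun j => c j * (snd (q j) - snd (q i))) = 0 ->
  sum4 (fun j => c j * sarea (q i) (q j) (q k)) = 0.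
Proof.
  intros Hx Hy.
  transitivity ((sum4 (fun j => c j * (fst (q j) - fst (q i))) * (snd (q k) - snd (q i))
                 - sum4 (fun j => c j * (snd (q j) - snd (q i))) * (fst (q k) - fst (q i))) / 2).
  - unfold sum4, sarea; field.
  - rewrite Hx, Hy. field.
Qed.

Lemma Rmult_eq0_reg_l c x : c * x = 0 -> c <> 0 -> x = 0.
Proof.
  intros H Hc. destruct (Rmult_integral _ _ H) as [H'|H']; [contradiction | exact H'].
Qed.

Lemma sarea_rotate a b c : sarea a b c = sarea c a b.
Proof. unfold sarea. field. Qed.

Lemma sarea_quadrilateral p1 p2 p3 p4 :
  sarea p1 p2 p3 + sarea p3 p4 p1 = sarea p2 p3 p4 + sarea p4 p1 p2.
Proof. unfold sarea. field. Qed.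

Section SymmetricConfiguration.

Variables (alpha beta lam : R) (m : nat -> R) (q : nat -> R * R).
Hypotheses (Halpha : 0 < alpha) (Halpha_beta : alpha < beta).
Hypotheses (Hm1 : m 1%nat = beta) (Hm2 : m 2%nat = beta)
           (Hm3 : m 3%nat = alpha) (Hm4 : m 4%nat = alpha).
Hypothesis Hdistinct : forall i j, is_body i -> is_body j -> i <> j -> q i <> q j.
Hypothesis Hcom_x : sum4 (fun i => m i * fst (q i)) = 0.
Hypothesis Hcom_y : sum4 (fun i => m i * snd (q i)) = 0.
Hypothesis Hcc : forall i, is_body i ->
  sum4 (fun j => if Nat.eqb j i then 0
                 else m j * (fst (q j) - fst (q i)) / rdist q i j ^ 3) = lam * fst (q i) /\
  sum4 (fun j => if Nat.eqb j i then 0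
                 else m j * (snd (q j) - snd (q i)) / rdist q i j ^ 3) = lam * snd (q i).
Hypothesis Hconvex : convex_cyclic4 q.
Hypothesis Hdiag : rdist q 1 3 = rdist q 2 4.

Let e i j := / rdist q i j ^ 3 + lam / sum4 m.

Let D1 := sarea (q 2%nat) (q 3%nat) (q 4%nat).
Let D2 := sarea (q 3%nat) (q 4%nat) (q 1%nat).
Let D3 := sarea (q 4%nat) (q 1%nat) (q 2%nat).
Let D4 := sarea (q 1%nat) (q 2%nat) (q 3%nat).

Lemma e_sym i j : e i j = e j i.
Proof. unfold e. rewrite rdist_sym. reflexivity. Qed.

Lemma area_relation i k : is_body i ->
  sum4 (fun j => m j * e i j * sarea (q i) (q j) (q k)) = 0.
Proof.
  intros Hi.
  assert (HM : sum4 m <> 0) by (unfold sum4; lra).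
  destruct (Hcc i Hi) as [Hx Hy].
  apply (balance_sarea (fun j => m j * e i j)).
  - exact (cc_balance m (fun j => fst (q j)) (fun j => rdist q i j ^ 3) lam i Hi HM Hcom_x Hx).
  - exact (cc_balance m (fun j => snd (q j)) (fun j => rdist q i j ^ 3) lam i Hi HM Hcom_y Hy).
Qed.

Lemma area_relations :
  beta * e 1 2 * D3 + alpha * e 1 3 * D2 = 0 /\
  beta * e 1 2 * D4 - alpha * e 1 4 * D2 = 0 /\
  beta * e 1 2 * D4 + alpha * e 1 3 * D1 = 0 /\
  beta * e 1 3 * D2 + beta * e 2 3 * D1 = 0 /\
  beta * e 1 3 * D4 + alpha * e 3 4 * D1 = 0.
Proof.
  assert (H14 := area_relation 1 4 ltac:(unfold is_body; lia)).
  assert (H13 := area_relation 1 3 ltac:(unfold is_body; lia)).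
  assert (H23 := area_relation 2 3 ltac:(unfold is_body; lia)).
  assert (H34 := area_relation 3 4 ltac:(unfold is_body; lia)).
  assert (H32 := area_relation 3 2 ltac:(unfold is_body; lia)).
  assert (E24 : e 2 4 = e 1 3) by (unfold e; rewrite Hdiag; reflexivity).
  unfold sum4 in *. rewrite Hm1, Hm2, Hm3, Hm4 in *.
  rewrite (e_sym 2 1), E24 in H23. rewrite (e_sym 3 1), (e_sym 3 2) in H34, H32.
  unfold D1, D2, D3, D4, sarea in *.
  repeat split; lra.
Qed.

Lemma convex_areas : D1 <> 0 /\ D2 <> 0 /\ D3 <> 0 /\ D4 <> 0 /\ 0 < D1 * D2.
Proof.
  unfold convex_cyclic4 in Hconvex; cbv zeta in Hconvex.
  unfold D1, D2, D3, D4. destruct Hconvex as [H|H]; repeat split; nra.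
Qed.

Lemma sqdist_eq_of_e_zero i j k l :
  q i <> q j -> q k <> q l -> e i j = 0 -> e k l = 0 ->
  sqdist (q i) (q j) = sqdist (q k) (q l).
Proof.
  intros Hij Hkl Heij Hekl.
  rewrite <- !rdist_sq. f_equal.
  apply pow3_inj; try (apply rdist_pos; assumption).
  apply Rinv_eq_reg. unfold e in *. lra.
Qed.

Lemma e12_neq0 : e 1 2 <> 0.
Proof.
  intros H12.
  destruct area_relations as [C1 [C5 [_ [C3 C4]]]].
  destruct convex_areas as [N1 [N2 _]].
  assert (H13 : e 1 3 = 0).
  { apply (Rmult_eq0_reg_l (alpha * D2)); [rewrite H12 in C1; lra|].
    apply Rmult_integral_contrapositive_currified; [lra | exact N2]. }
  assert (H14 : e 1 4 = 0).
  { apply (Rmult_eq0_reg_l (alpha * D2)); [rewrite H12 in C5; lra|].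
    apply Rmult_integral_contrapositive_currified; [lra | exact N2]. }
  assert (H23 : e 2 3 = 0).
  { apply (Rmult_eq0_reg_l (beta * D1)); [rewrite H13 in C3; lra|].
    apply Rmult_integral_contrapositive_currified; [lra | exact N1]. }
  assert (H34 : e 3 4 = 0).
  { apply (Rmult_eq0_reg_l (alpha * D1)); [rewrite H13 in C4; lra|].
    apply Rmult_integral_contrapositive_currified; [lra | exact N1]. }
  assert (H24 : e 2 4 = 0) by (unfold e; rewrite <- Hdiag; exact H13).
  apply (four_points_not_equidistant (q 1%nat) (q 2%nat) (q 3%nat) (q 4%nat)
           (sqdist (q 1%nat) (q 2%nat))).
  { apply sqdist_pos, Hdistinct; unfold is_body; lia. }
  { reflexivity. }
  all: apply sqdist_eq_of_e_zero; auto; apply Hdistinct; unfold is_body; lia.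
Qed.

Lemma D4_neq_D1 : D4 <> D1.
Proof.
  intros H41.
  destruct area_relations as [C1 [_ [_ [_ C4]]]].
  destruct convex_areas as [N1 [N2 [_ [_ Hpos]]]].
  assert (Hquad : D4 + D2 = D1 + D3) by apply sarea_quadrilateral.
  assert (Hsum1 : beta * e 1 2 + alpha * e 1 3 = 0).
  { apply (Rmult_eq0_reg_l D2); [|exact N2].
    replace D3 with D2 in C1 by lra. lra. }
  assert (Hsum2 : beta * e 1 3 + alpha * e 3 4 = 0).
  { apply (Rmult_eq0_reg_l D1); [|exact N1].
    rewrite H41 in C4. lra. }
  assert (H34 : e 3 4 = e 1 2).
  { unfold e. rewrite !rdist_sqdist.
    rewrite (isosceles_trapezoid (q 1%nat) (q 2%nat) (q 3%nat) (q 4%nat)); try reflexivity.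
    - apply Hdistinct; unfold is_body; lia.
    - exact H41.
    - exact Hpos.
    - rewrite <- !rdist_sq, Hdiag. reflexivity. }
  apply e12_neq0, (Rmult_eq0_reg_l ((beta - alpha) * (beta + alpha))).
  - rewrite H34 in Hsum2. nra.
  - apply Rmult_integral_contrapositive_currified; lra.
Qed.

Lemma D4_eq_D3 : D4 = D3.
Proof.
  destruct area_relations as [C1 [_ [C2 _]]].
  assert (Hquad : D4 + D2 = D1 + D3) by apply sarea_quadrilateral.
  assert (Hcross : D3 * D1 - D4 * D2 = 0).
  { apply (Rmult_eq0_reg_l (beta * e 1 2)).
    - transitivity ((beta * e 1 2 * D3 + alpha * e 1 3 * D2) * D1
                    - (beta * e 1 2 * D4 + alpha * e 1 3 * D1) * D2); [ring|].
      rewrite C1, C2. ring.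
    - apply Rmult_integral_contrapositive_currified; [lra | exact e12_neq0]. }
  assert (Hfac : (D4 - D1) * (D4 - D3) = 0).
  { transitivity (D4 * (D4 + D2 - D1 - D3) + (D3 * D1 - D4 * D2)); [ring|].
    rewrite Hcross. replace (D4 + D2 - D1 - D3) with 0 by lra. ring. }
  destruct (Rmult_integral _ _ Hfac) as [H|H].
  - exfalso. apply D4_neq_D1. lra.
  - lra.
Qed.

End SymmetricConfiguration.

Theorem lemma3p3 (alpha beta : R) (m : nat -> R) (q : nat -> R * R) :
  0 < alpha -> alpha < beta ->
  m 1%nat = beta -> m 2%nat = beta -> m 3%nat = alpha -> m 4%nat = alpha ->
  central_configuration4 m q ->
  convex_cyclic4 q ->
  rdist q 1%nat 3%nat = rdist q 2%nat 4%nat ->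
  oDelta q 4%nat = - oDelta q 3%nat.
Proof.
  intros Halpha Hab Hm1 Hm2 Hm3 Hm4 [Hdistinct [Hcom_x [Hcom_y [lam Hcc]]]] Hconvex Hdiag.
  unfold oDelta, absDelta; cbn [Nat.odd Nat.even negb].
  rewrite Ropp_involutive, (sarea_rotate (q 1%nat) (q 2%nat) (q 4%nat)).
  f_equal.
  exact (D4_eq_D3 alpha beta lam m q Halpha Hab Hm1 Hm2 Hm3 Hm4
           Hdistinct Hcom_x Hcom_y Hcc Hconvex Hdiag).
Qed.
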